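(* Let $n\geq1$ and let $\mathcal{M}_n$ be the structure defined below. (i) For every automorphism $\sigma$ of $\mathcal{M}_n$ fixing $P$ pointwise there is a unique additive map $F_\sigma:\mathbb{C}\to\mathbb{C}$ with $\sigma(x)=F_\sigma(\pi(x))\star x$ for all $x\in S$, and $\sigma\mapsto F_\sigma$ is a bijection from $\mathrm{Aut}(\mathcal{M}_n/P)$ onto $D_n$. (ii) Every relation $R_n$ is definable (with the same sorts) in the structure $\mathcal{M}_1'=(S,P,\pi,\star,\oplus,\otimes)$, where $\otimes:S\times S\to S$ is $((\alpha,a'),(\beta,b'))\mapsto(\alpha\beta,\alpha b'+\beta a')$; that is, $\mathcal{M}_n$ is a definitional reduct of $\mathcal{M}_1'$.
   Context: For $n\geq1$, $\mathcal{M}_n$ is the two-sorted structure with sort $P=\mathbb{C}$ carrying the full field structure $(\mathbb{C},+,\cdot)$, sort $S=\mathbb{C}\times\mathbb{C}$, the projection $\pi:S\to P$, $(\alpha,a')\mapsto\alpha$, the addition $\oplus$ on $S$, $((\alpha,a'),(\beta,b'))\mapsto(\alpha+\beta,a'+b')$, the action $\star$ of $P$ on $S$, $\beta\star(\alpha,a')=(\alpha,a'+\beta)$, and the $(n+1)$-ary relation $R_n$ on $S$ given by: $R_n((\alpha_1,a_1'),\ldots,(\alpha_{n+1},a_{n+1}'))$ holds iff $\alpha_i=\alpha_1^i$ for all $i\leq n+1$ and $a_{n+1}'=\sum_{i=1}^{n}\binom{n+1}{i}(-1)^{n-i}\alpha_{n+1-i}a_i'$. $D_n$ is the set of additive $F:\mathbb{C}\to\mathbb{C}$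 with $F(\alpha^{n+1})=\sum_{i=1}^{n}\binom{n+1}{i}(-1)^{n-i}\alpha^{n+1-i}F(\alpha^i)$ for all $\alpha\in\mathbb{C}$. *)

From mathcomp Require Import all_boot all_algebra.
From mathcomp Require Import complex Rstruct.
Set Implicit Arguments. Unset Strict Implicit. Unset Printing Implicit Defensive.
Import GRing.Theory.
Local Open Scope ring_scope.

Definition C : fieldType := complex Rdefinitions.R.

Definition S : Type := (C * C)%type.

Definition piS (x : S) : C := x.1.
Definition oplusS (x y : S) : S := (x.1 + y.1, x.2 + y.2).
Definition starS (b : C) (x : S) : S := (x.1, x.2 + b).
Definition otimesS (x y : S) : S := (x.1 * y.1, x.1 * y.2 + y.1 * x.2).

(* The (n+1)-ary relation R_n.  A tuple (x_1,...,x_{n+1}) is given as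
   x : 'I_n.+1 -> S, with x_k (1-based) = x (inord k.-1). *)
Definition Rrel (n : nat) (x : 'I_n.+1 -> S) : Prop :=
  let a := fun k : nat => x (inord k.-1) in
  (forall i : 'I_n.+1, (a i.+1).1 = (a 1%N).1 ^+ i.+1) /\
  (a n.+1).2 = \sum_(1 <= i < n.+1)
                 'C(n.+1, i)%:R * (-1) ^+ (n - i) * (a (n.+1 - i)%N).1 * (a i).2.

Definition additiveC (F : C -> C) : Prop := forall a b, F (a + b) = F a + F b.

Definition Dn (n : nat) (F : C -> C) : Prop :=
  additiveC F /\
  forall alpha : C,
    F (alpha ^+ n.+1) = \sum_(1 <= i < n.+1)
       'C(n.+1, i)%:R * (-1) ^+ (n - i) * alpha ^+ (n.+1 - i) * F (alpha ^+ i).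

(* Automorphisms of M_n fixing P pointwise: the P-component is the identity
   (so the field structure on P is trivially preserved) and the S-component
   sigma is a bijection of S preserving pi, (+), the action and R_n. *)
Definition autMnP (n : nat) (sigma : S -> S) : Prop :=
  bijective sigma /\
  (forall x, piS (sigma x) = piS x) /\
  (forall x y, sigma (oplusS x y) = oplusS (sigma x) (sigma y)) /\
  (forall (b : C) x, sigma (starS b x) = starS b (sigma x)) /\
  (forall x : 'I_n.+1 -> S, Rrel x <-> Rrel (fun i => sigma (x i))).

(* Variables are de Bruijn-style indices into two environments (one per sort);
   a quantifier over a sort pushes the new value at index 0 of that sort. *)
Inductive termP : Type :=
  | PVar  : nat -> termP
  | PZero : termP
  | POne  : termP
  | PAdd  : termP -> termP -> termP
  | PMul  : termP -> termP -> termP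
  | PPi   : termS -> termP
with termS : Type :=
  | SVar    : nat -> termS
  | SOplus  : termS -> termS -> termS
  | SStar   : termP -> termS -> termS
  | SOtimes : termS -> termS -> termS.

Inductive formula : Type :=
  | FEqP : termP -> termP -> formula
  | FEqS : termS -> termS -> formula
  | FNot : formula -> formula
  | FAnd : formula -> formula -> formula
  | FOr  : formula -> formula -> formula
  | FImp : formula -> formula -> formula
  | FExP : formula -> formula
  | FAllP : formula -> formula
  | FExS : formula -> formula
  | FAllS : formula -> formula.

Fixpoint evalP (eP : nat -> C) (eS : nat -> S) (t : termP) : C :=
  match t with
  | PVar k => eP k
  | PZero => 0
  | POne => 1
  | PAdd t1 t2 => evalP eP eS t1 + evalP eP eS t2
  | PMul t1 t2 => evalP eP eS t1 * evalP eP eS t2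
  | PPi u => piS (evalS eP eS u)
  end
with evalS (eP : nat -> C) (eS : nat -> S) (u : termS) : S :=
  match u with
  | SVar k => eS k
  | SOplus u1 u2 => oplusS (evalS eP eS u1) (evalS eP eS u2)
  | SStar t u1 => starS (evalP eP eS t) (evalS eP eS u1)
  | SOtimes u1 u2 => otimesS (evalS eP eS u1) (evalS eP eS u2)
  end.

Definition scons {T : Type} (v : T) (e : nat -> T) : nat -> T :=
  fun k => if k is k'.+1 then e k' else v.

Fixpoint sat (eP : nat -> C) (eS : nat -> S) (f : formula) : Prop :=
  match f with
  | FEqP t1 t2 => evalP eP eS t1 = evalP eP eS t2
  | FEqS u1 u2 => evalS eP eS u1 = evalS eP eS u2
  | FNot g => ~ sat eP eS g
  | FAnd g h => sat eP eS g /\ sat eP eS h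
  | FOr g h => sat eP eS g \/ sat eP eS h
  | FImp g h => sat eP eS g -> sat eP eS h
  | FExP g => exists c : C, sat (scons c eP) eS g
  | FAllP g => forall c : C, sat (scons c eP) eS g
  | FExS g => exists s : S, sat eP (scons s eS) g
  | FAllS g => forall s : S, sat eP (scons s eS) g
  end.

(* A relation X on S^(n+1) is (parameter-free) definable in M_1' by a formula
   whose free variables are the S-variables 0..n (variable k standing for the
   (k+1)-st argument); the truth value may not depend on the values of any
   other variables, i.e. no parameters are used. *)
Definition definable_M1' (n : nat) (X : ('I_n.+1 -> S) -> Prop) : Prop :=
  exists phi : formula,
    forall (x : 'I_n.+1 -> S) (eP : nat -> C) (eS : nat -> S),
      (forall i : 'I_n.+1, eS i = x i) ->
      (sat eP eS phi <-> X x).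

From mathcomp Require Import all_boot all_algebra.
From mathcomp Require Import complex Rstruct.
From mathcomp Require Import ring zify.
From Stdlib Require Import FunctionalExtensionality.
Set Implicit Arguments. Unset Strict Implicit.
Import GRing.Theory.
Local Open Scope ring_scope.

(* Everything rests on the linear relation
     a_n = sum_{i=1}^{n} C(n+1,i) (-1)^(n-i) al^(n+1-i) a_{i-1}          (rec)
   satisfied by a sequence a : nat -> R over a commutative ring R.  A tuple
   x_0..x_n of S is in R_n iff its first coordinates are the powers
   al^(k+1) of al = pi(x_0) and its second coordinates satisfy (rec), and
   F lies in D_n iff F is additive and k |-> F(al^(k+1)) satisfies (rec).
   (i) An automorphism over P commutes with the action, hence is the twist
   x |-> F(pi x) * x by F(a) = (sigma(a,0)).2, which is additive.  Since (rec)
   is linear, twisting by F preserves R_n when F is in D_n; conversely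
   applying the twist to the tuple ((al^(k+1), 0))_k shows F is in D_n.
   (ii) The (k+1)-st otimes-power of x_0 = (al, b) is (al^(k+1), (k+1)al^k b),
   and the sequence (k+1) al^k b satisfies (rec) when n >= 1 (a binomial
   identity).  So, for tuples of powers, R_n holds iff x_k = d_k * x_0^(k+1)
   for some d_0..d_n satisfying (rec): this is a formula of M_1', where the
   sign -1 is obtained as the unique m with m + 1 = 0. *)

Section LinearRelation.
Context {R : comPzRingType}.

Definition coef (n i : nat) : R := 'C(n.+1, i)%:R * (-1) ^+ (n - i).

Definition rec (n : nat) (al : R) (a : nat -> R) : Prop :=
  a n = \sum_(1 <= i < n.+1) coef n i * al ^+ (n.+1 - i) * a i.-1.

Lemma rec_ext n al (a b : nat -> R) :
  (forall k, (k <= n)%N -> a k = b k) -> rec n al a <-> rec n al b.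
Proof.
move=> eab; rewrite /rec eab //.
suff -> : \sum_(1 <= i < n.+1) coef n i * al ^+ (n.+1 - i) * a i.-1 =
          \sum_(1 <= i < n.+1) coef n i * al ^+ (n.+1 - i) * b i.-1 by [].
by apply: eq_big_nat => i /andP[i_gt0 i_le]; rewrite eab //; lia.
Qed.

Lemma rec_add n al (a c : nat -> R) :
  rec n al c -> (rec n al (fun k => a k + c k) <-> rec n al a).
Proof.
rewrite /rec => ->.
have -> : \sum_(1 <= i < n.+1) coef n i * al ^+ (n.+1 - i) * (a i.-1 + c i.-1) =
          \sum_(1 <= i < n.+1) coef n i * al ^+ (n.+1 - i) * a i.-1 +
          \sum_(1 <= i < n.+1) coef n i * al ^+ (n.+1 - i) * c i.-1.
  by rewrite -big_split; apply: eq_bigr => i _; rewrite mulrDr.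
by split=> [/addIr | ->].
Qed.

Lemma rec_sub n al (a c : nat -> R) :
  rec n al c -> (rec n al (fun k => a k - c k) <-> rec n al a).
Proof.
move=> rel_c; rewrite -(rec_add (fun k => a k - c k) rel_c).
by apply: rec_ext => k _; rewrite subrK.
Qed.

(* sum_{j<n} C(n,j) (-1)^(n-1-j) = 1, from (-1 + 1)^n = 0. *)
Lemma alt_binomial_sum n : (1 <= n)%N ->
  \sum_(0 <= j < n) ('C(n, j)%:R * (-1) ^+ (n - j.+1) : R) = 1.
Proof.
move=> n_gt0.
have : ((-1 + 1 : R) ^+ n = 0) by rewrite addNr expr0n; case: n n_gt0.
rewrite exprDn big_ord_recr /= subnn expr0 expr1n mul1r binn big_mkord.
move/eqP; rewrite addr_eq0 => /eqP sum_eq.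
transitivity (- \sum_(i < n) ((-1) ^+ (n - i) * 1 ^+ i *+ 'C(n, i) : R));
  last by rewrite sum_eq opprK.
rewrite -sumrN; apply: eq_bigr => i _.
have i_lt := ltn_ord i.
have -> : (n - i = (n - i.+1).+1)%N by lia.
by rewrite expr1n mulr1 exprS -mulr_natl; ring.
Qed.

(* sum_{i=1}^{n} C(n+1,i) (-1)^(n-i) i = n+1, using i C(n+1,i) = (n+1) C(n,i-1). *)
Lemma weighted_binomial_sum n : (1 <= n)%N ->
  \sum_(1 <= i < n.+1) coef n i * i%:R = n.+1%:R.
Proof.
move=> n_gt0; rewrite big_add1 /=.
transitivity (n.+1%:R * \sum_(0 <= j < n) ('C(n, j)%:R * (-1) ^+ (n - j.+1) : R));
  last by rewrite alt_binomial_sum // mulr1.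
rewrite mulr_sumr; apply: eq_big_nat => j _; rewrite /coef.
have -> : ('C(n.+1, j.+1)%:R * (-1) ^+ (n - j.+1) * j.+1%:R : R) =
          (j.+1 * 'C(n.+1, j.+1))%N%:R * (-1) ^+ (n - j.+1) by rewrite natrM; ring.
by rewrite -mul_bin_diag natrM mulrA.
Qed.

Lemma rec_power_tangent n (al b : R) : (1 <= n)%N ->
  rec n al (fun k => k.+1%:R * al ^+ k * b).
Proof.
move=> n_gt0; rewrite /rec.
rewrite (eq_big_nat _ _ (F2 := fun i => coef n i * i%:R * (al ^+ n * b))).
  by rewrite -mulr_suml weighted_binomial_sum // mulrA.
move=> i /andP[i_gt0 i_le].
have -> : al ^+ n = al ^+ (n.+1 - i) * al ^+ i.-1 by rewrite -exprD; congr (_ ^+ _); lia.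
have -> : i.-1.+1 = i by lia.
ring.
Qed.

End LinearRelation.

Definition powers (n : nat) (g : nat -> S) : Prop :=
  forall k, (k <= n)%N -> (g k).1 = (g 0%N).1 ^+ k.+1.

Definition RN (n : nat) (g : nat -> S) : Prop :=
  powers n g /\ rec n (g 0%N).1 (fun k => (g k).2).

Lemma Rrel_RN n (x : 'I_n.+1 -> S) (g : nat -> S) :
  (forall k, (k <= n)%N -> x (inord k) = g k) -> Rrel x <-> RN n g.
Proof.
move=> xg; rewrite /Rrel /RN /powers /rec /coef /= (xg n) // (xg 0%N) //.
have sum_g : \sum_(1 <= i < n.+1) 'C(n.+1, i)%:R * (-1) ^+ (n - i) *
                (x (inord (n.+1 - i).-1)).1 * (x (inord i.-1)).2 =
             \sum_(1 <= i < n.+1) 'C(n.+1, i)%:R * (-1) ^+ (n - i) *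
                (g (n - i)%N).1 * (g i.-1).2.
  apply: eq_big_nat => i /andP[i_gt0 i_le].
  have -> : (n.+1 - i).-1 = (n - i)%N by lia.
  by rewrite !xg //; lia.
have powers_iff : (forall i : 'I_n.+1, (x (inord i)).1 = (g 0%N).1 ^+ i.+1) <->
                  (forall k, (k <= n)%N -> (g k).1 = (g 0%N).1 ^+ k.+1).
  split=> pw k.
    by move=> k_le; have := pw (inord k); rewrite inordK // xg.
  have k_le : (k <= n)%N by rewrite -ltnS.
  by rewrite xg // (pw k k_le).
have sum_pw : powers n g ->
    \sum_(1 <= i < n.+1) 'C(n.+1, i)%:R * (-1) ^+ (n - i) * (g (n - i)%N).1 * (g i.-1).2 =
    \sum_(1 <= i < n.+1) 'C(n.+1, i)%:R * (-1) ^+ (n - i) *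
       (g 0%N).1 ^+ (n.+1 - i) * (g i.-1).2.
  move=> pw; apply: eq_big_nat => i /andP[i_gt0 i_le].
  by rewrite (pw (n - i)%N (leq_subr i n)) subSn.
by rewrite sum_g powers_iff; split=> -[pw rel]; split=> //; rewrite rel sum_pw.
Qed.

Definition twist (F : C -> C) (x : S) : S := starS (F (piS x)) x.

Lemma Dn_rec n F :
  Dn n F <-> additiveC F /\ forall al, rec n al (fun k => F (al ^+ k.+1)).
Proof.
suff eq_rel : forall al, rec n al (fun k => F (al ^+ k.+1)) <->
  F (al ^+ n.+1) = \sum_(1 <= i < n.+1)
     'C(n.+1, i)%:R * (-1) ^+ (n - i) * al ^+ (n.+1 - i) * F (al ^+ i).
  by split=> -[addF rel]; split=> // al; apply/eq_rel.
move=> al; rewrite /rec /coef.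
suff -> : \sum_(1 <= i < n.+1) 'C(n.+1, i)%:R * (-1) ^+ (n - i) *
              al ^+ (n.+1 - i) * F (al ^+ i.-1.+1) =
          \sum_(1 <= i < n.+1) 'C(n.+1, i)%:R * (-1) ^+ (n - i) *
              al ^+ (n.+1 - i) * F (al ^+ i) by [].
by apply: eq_big_nat => i /andP[i_gt0 _]; rewrite prednK.
Qed.

Lemma RN_twist n F (g : nat -> S) : powers n g ->
  RN n (fun k => twist F (g k)) <->
  rec n (g 0%N).1 (fun k => (g k).2 + F ((g 0%N).1 ^+ k.+1)).
Proof.
move=> pw; rewrite /RN /twist /starS /piS /=.
have seq_eq : forall k, (k <= n)%N ->
    (g k).2 + F (g k).1 = (g k).2 + F ((g 0%N).1 ^+ k.+1) by move=> k k_le; rewrite pw.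
split=> [[_ rel] | rel]; first exact/(rec_ext _ seq_eq).
by split; [exact: pw | exact/(rec_ext _ seq_eq)].
Qed.

Lemma aut_is_twist n sigma : autMnP n sigma ->
  forall x, sigma x = twist (fun a => (sigma (a, 0)).2) x.
Proof.
move=> [_ [pi_sigma [_ [star_sigma _]]]] [a b].
have -> : (a, b) = starS b (a, 0) by rewrite /starS /= add0r.
rewrite star_sigma /twist /piS /starS /=.
have := pi_sigma (a, 0); rewrite /piS /=.
by case: (sigma (a, 0)) => p q /= ->; rewrite add0r addrC.
Qed.

Lemma aut_twist_unique n sigma : autMnP n sigma ->
  exists! F : C -> C, additiveC F /\ forall x : S, sigma x = starS (F (piS x)) x.
Proof.
move=> autS; exists (fun a => (sigma (a, 0)).2); split.
  split; last exact: aut_is_twist autS.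
  have [_ [_ [add_sigma _]]] := autS.
  by move=> a b; have := add_sigma (a, 0) (b, 0); rewrite /oplusS /= addr0 => ->.
move=> G [_ sigmaG]; apply: functional_extensionality => a.
by rewrite sigmaG /starS /= add0r.
Qed.

(* The twist by F is an automorphism only if F lies in D_n: apply it to the
   tuple (al^(k+1), 0)_k, which is in R_n. *)
Lemma aut_twist_Dn n sigma F : autMnP n sigma -> additiveC F ->
  (forall x : S, sigma x = starS (F (piS x)) x) -> Dn n F.
Proof.
move=> [_ [_ [_ [_ sigmaR]]]] addF sigmaF; apply/Dn_rec; split=> // al.
pose g : nat -> S := fun k => (al ^+ k.+1, 0).
pose x : 'I_n.+1 -> S := fun i => g i.
have xg : forall k, (k <= n)%N -> x (inord k) = g k by move=> k k_le; rewrite /x inordK.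
have pw : powers n g by move=> k _; rewrite /g /= expr1.
have Rx : Rrel x.
  rewrite (Rrel_RN xg); split=> //.
  by rewrite /rec /g /= big1 // => i _; rewrite mulr0.
move: (proj1 (sigmaR x) Rx); rewrite (@Rrel_RN _ _ (fun k => twist F (g k))); last first.
  by move=> k k_le; rewrite sigmaF xg.
rewrite RN_twist // /g /= expr1.
by apply: iffLR; apply: rec_ext => k _; rewrite add0r.
Qed.

Lemma Dn_twist_aut n F : Dn n F -> autMnP n (twist F).
Proof.
move=> DF; have [addF relF] := proj1 (Dn_rec n F) DF.
split; first by exists (twist (fun a => - F a)) => -[a b];
  rewrite /twist /starS /piS /= ?addrK ?addrNK.
split; first by [].
split; first by move=> [a b] [c d]; rewrite /twist /oplusS /starS /piS /= addF;
  congr (_, _); ring.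
split; first by move=> e [a b]; rewrite /twist /starS /piS /=; congr (_, _); ring.
move=> x; set g : nat -> S := fun k => x (inord k).
have xg : forall k, (k <= n)%N -> x (inord k) = g k by [].
rewrite (Rrel_RN xg) (@Rrel_RN _ _ (fun k => twist F (g k))) //.
split=> [[pw rel] | twisted].
- by apply/(RN_twist F pw)/(rec_add _ (relF _)).
- have pw : powers n g := proj1 twisted.
  by move: twisted; rewrite (RN_twist F pw) (rec_add _ (relF _)).
Qed.

Fixpoint PPow (t : termP) (k : nat) : termP :=
  if k is k'.+1 then PMul (PPow t k') t else POne.
Fixpoint PNat (k : nat) : termP :=
  if k is k'.+1 then PAdd (PNat k') POne else PZero.
(* SPow u k is the (k+1)-st otimes-power of u. *)
Fixpoint SPow (u : termS) (k : nat) : termS :=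
  if k is k'.+1 then SOtimes (SPow u k') u else u.
Fixpoint PSum (f : nat -> termP) (k : nat) : termP :=
  if k is k'.+1 then PAdd (PSum f k') (f k) else PZero.
Fixpoint FAll (g : nat -> formula) (k : nat) : formula :=
  if k is k'.+1 then FAnd (FAll g k') (g k') else FEqP PZero PZero.
Fixpoint FExPs (k : nat) (g : formula) : formula :=
  if k is k'.+1 then FExPs k' (FExP g) else g.

Lemma evalP_PPow eP eS t k : evalP eP eS (PPow t k) = evalP eP eS t ^+ k.
Proof. by elim: k => [|k IH] //=; rewrite IH exprSr. Qed.

Lemma evalP_PNat eP eS k : evalP eP eS (PNat k) = k%:R.
Proof. by elim: k => [|k IH] //=; rewrite IH natr1. Qed.

Lemma evalS_SPow eP eS u k :
  evalS eP eS (SPow u k) = ((evalS eP eS u).1 ^+ k.+1,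
                            k.+1%:R * (evalS eP eS u).1 ^+ k * (evalS eP eS u).2).
Proof.
elim: k => [|k IH] /=; first by case: (evalS eP eS u) => p q; rewrite expr1 mulr1 mul1r.
rewrite IH /otimesS /=; set p := (evalS eP eS u).1; set q := (evalS eP eS u).2.
by congr (_, _); rewrite !exprS; ring.
Qed.

Lemma evalP_PSum eP eS f k :
  evalP eP eS (PSum f k) = \sum_(1 <= i < k.+1) evalP eP eS (f i).
Proof.
elim: k => [|k IH] /=; first by rewrite big_geq.
by rewrite IH (big_nat_recr k.+1).
Qed.

Lemma sat_FAll eP eS g k :
  sat eP eS (FAll g k) <-> forall j, (j < k)%N -> sat eP eS (g j).
Proof.
elim: k => [|k IH] /=; first by [].
rewrite IH; split=> [[sat_lt sat_k] j | sat_le].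
  by rewrite ltnS leq_eqVlt => /predU1P[-> | /sat_lt].
by split=> [j j_lt|]; apply: sat_le; rewrite // ltnS ltnW.
Qed.

(* Valuation of P-variables after binding the block f_0..f_(k-1) over e. *)
Definition extend (k : nat) (f e : nat -> C) : nat -> C :=
  fun j => if (j < k)%N then f j else e (j - k)%N.

Lemma extend_scons k c (f e : nat -> C) :
  scons c (extend k f e) = extend k.+1 (scons c f) e.
Proof. by apply: functional_extensionality => -[|j]. Qed.

Lemma sat_FExPs k eP eS g :
  sat eP eS (FExPs k g) <-> exists f, sat (extend k f eP) eS g.
Proof.
elim: k g => [|k IH] g /=.
  have extend0 f : extend 0 f eP = eP.
    by apply: functional_extensionality => j; rewrite /extend subn0.
  by split=> [sat_g | [f]]; [exists (fun=> 0) | ]; rewrite extend0.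
rewrite IH; split=> [[f [c sat_g]] | [f sat_g]].
  by exists (scons c f); rewrite -extend_scons.
exists (fun j => f j.+1), (f 0%N); rewrite extend_scons.
by congr (sat _ _ g): sat_g; apply: functional_extensionality => -[|j].
Qed.

Lemma starS_eq (x : S) d p t : x.1 = p -> x = starS d (p, t) <-> d = x.2 - t.
Proof.
case: x => a b /= ->; rewrite /starS /=.
by split=> [[->] | ->]; [rewrite addrC addKr | rewrite addrC subrK].
Qed.

(* The defining formula of R_n.  The P-variables d_0..d_n are 0..n and the
   sign m = -1 is n+1; the tuple is S-variables 0..n, al = pi(x_0). *)
Definition alphaT : termP := PPi (SVar 0).

Definition powersF (n : nat) : formula :=
  FAll (fun k => FEqP (PPi (SVar k)) (PPow alphaT k.+1)) n.+1.

Definition shiftF (n : nat) : formula :=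
  FAnd (FAll (fun k => FEqS (SVar k) (SStar (PVar k) (SPow (SVar 0) k))) n.+1)
       (FEqP (PVar n) (PSum (fun i => PMul (PMul (PMul (PNat 'C(n.+1, i))
                 (PPow (PVar n.+1) (n - i))) (PPow alphaT (n.+1 - i))) (PVar i.-1)) n)).

Definition RnF (n : nat) : formula :=
  FAnd (powersF n)
       (FExP (FAnd (FEqP (PAdd (PVar 0) POne) PZero) (FExPs n.+1 (shiftF n)))).

Lemma sat_powersF n eP eS : sat eP eS (powersF n) <-> powers n eS.
Proof.
rewrite sat_FAll /= /powers.
by split=> pw k k_le; move: (pw k k_le); rewrite evalP_PPow /piS exprSr.
Qed.

Lemma sat_shiftF n (e : nat -> C) eS : e n.+1 = -1 ->
  sat e eS (shiftF n) <->
  (forall k, (k <= n)%N -> eS k = starS (e k)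
     ((eS 0%N).1 ^+ k.+1, k.+1%:R * (eS 0%N).1 ^+ k * (eS 0%N).2))
  /\ rec n (eS 0%N).1 e.
Proof.
move=> e_sign; rewrite /shiftF; cbn [sat]; rewrite sat_FAll evalP_PSum.
have -> : \sum_(1 <= i < n.+1) evalP e eS (PMul (PMul (PMul (PNat 'C(n.+1, i))
                 (PPow (PVar n.+1) (n - i))) (PPow alphaT (n.+1 - i))) (PVar i.-1)) =
          \sum_(1 <= i < n.+1) coef n i * (eS 0%N).1 ^+ (n.+1 - i) * e i.-1.
  by apply: eq_bigr => i _; rewrite /= evalP_PNat !evalP_PPow /= e_sign.
by split=> -[decomp rel]; split=> // k k_le; have := decomp k k_le; rewrite /= evalS_SPow.
Qed.

(* M_1' defines R_n: for tuples of powers of al, R_n says that the shifts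
   d_k = x_k.2 - (k+1) al^k b relative to the otimes-powers of x_0 satisfy
   (rec), which by linearity is equivalent to (rec) for the x_k.2. *)
Lemma sat_RnF n eP eS : (1 <= n)%N -> sat eP eS (RnF n) <-> RN n eS.
Proof.
move=> n_gt0; set al := (eS 0%N).1; set b := (eS 0%N).2.
set tangent := fun k => k.+1%:R * al ^+ k * b.
have shift_iff : powers n eS -> forall d k, (k <= n)%N ->
    eS k = starS d (al ^+ k.+1, tangent k) <-> d = (eS k).2 - tangent k.
  by move=> pw d k k_le; apply/starS_eq/pw.
have rel_shift : rec n al (fun k => (eS k).2 - tangent k) <-> rec n al (fun k => (eS k).2).
  exact/rec_sub/rec_power_tangent.
rewrite /RnF; cbn [sat]; rewrite sat_powersF /RN; split=> [[pw [m [m_sign /sat_FExPs [f]]]] | [pw rel]].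
  have m_eq : m = -1 by move: m_sign => /= /eqP; rewrite addr_eq0 => /eqP.
  set e := extend n.+1 f (scons m eP).
  have e_sign : e n.+1 = -1 by rewrite /e /extend ltnn subnn.
  move/(sat_shiftF _ e_sign) => [decomp rel]; split=> //; apply/rel_shift.
  by apply: iffLR rel; apply: rec_ext => k k_le; apply/shift_iff/decomp.
split=> //; exists (-1); split; first by rewrite /= addNr.
apply/sat_FExPs; exists (fun k => (eS k).2 - tangent k).
pose e := extend n.+1 (fun k => (eS k).2 - tangent k) (scons (-1) eP).
change (sat e eS (shiftF n)).
have e_sign : e n.+1 = -1 by rewrite /e /extend ltnn subnn.
have e_low k : (k <= n)%N -> e k = (eS k).2 - tangent k by rewrite /e /extend ltnS => ->.
apply/(sat_shiftF _ e_sign); split.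
  by move=> k k_le; apply/shift_iff => //; apply: e_low.
by apply/(rec_ext _ e_low)/rel_shift.
Qed.

Theorem mainTheorem10 (n : nat) (hn : (1 <= n)%N) :
  (forall sigma : S -> S, autMnP n sigma ->
     exists! F : C -> C, additiveC F /\ forall x : S, sigma x = starS (F (piS x)) x)
  /\ (forall (sigma : S -> S) (F : C -> C), autMnP n sigma -> additiveC F ->
        (forall x : S, sigma x = starS (F (piS x)) x) -> Dn n F)
  /\ (forall (sigma1 sigma2 : S -> S) (F : C -> C),
        autMnP n sigma1 -> autMnP n sigma2 -> additiveC F ->
        (forall x : S, sigma1 x = starS (F (piS x)) x) ->
        (forall x : S, sigma2 x = starS (F (piS x)) x) ->
        sigma1 = sigma2)
  /\ (forall F : C -> C, Dn n F ->
        exists sigma : S -> S, autMnP n sigma /\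
          forall x : S, sigma x = starS (F (piS x)) x)
  /\ definable_M1' (@Rrel n).
Proof.
split; first exact: aut_twist_unique.
split; first exact: aut_twist_Dn.
split.
  move=> sigma1 sigma2 F _ _ _ sigma1F sigma2F.
  by apply: functional_extensionality => x; rewrite sigma1F sigma2F.
split; first by move=> F DF; exists (twist F); split; [exact: Dn_twist_aut |].
exists (RnF n) => x eP eS eS_x.
by rewrite sat_RnF // (Rrel_RN (g := eS)) // => k k_le; rewrite -eS_x inordK.
Qed.
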